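(* Let $(\ell_{i:n})_{0\le i\le n\le m}$ be reals with $\ell_{0:n}=-1$, $n\mapsto\ell_{i:n}$ nonincreasing and $i\mapsto\ell_{i:n}$ nondecreasing, and let $\varphi_A=\max_{1\le i\le|A|}\mathbf 1\{p_{(i:A)}\le\ell_{i:|A|}\}$ ($\varphi_\emptyset=0$). Assume this is a family of local tests at level $\alpha$: for all $\mu\in\mathfrak F$, $\mathbb P_\mu(\varphi_{\mathcal H_0(\mu)}=1)\le\alpha$. Let $$\hat m_0=\max\{n\in\{0,\dots,m\}:\forall t\in[0,1],\ t>\ell_{((n+i(t)-m)\vee0):n}\},$$ and the reference family $\mathfrak R=(R_k,k-1)_{1\le k\le\hat m_0+1}$ with $R_k=\{i:p_i\le\ell_{k:\hat m_0}\}$ for $1\le k\le\hat m_0$ and $R_{\hat m_0+1}=\{1,\dots,m\}$. Then $\mathrm{JER}_\mu(\mathfrak R)\le\alpha$ for all $\mu\in\mathfrak F$, and $\hat V^{\mathrm{IP}}_\varphi(S)=\hat V^{\mathrm{JER}}_{\mathfrak R}(S)$ for all $S\subseteq\{1,\dots,m\}$.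
   Context: Data $X\sim\mu\in\mathfrak F$, null hypotheses $H_1,\dots,H_m\subseteq\mathfrak F$, $\mathcal H_0(\mu)=\{i:\mu\in H_i\}$, $p$-values $p_i\in[0,1]$; $p_{(i:A)}$ is the $i$-th smallest of $(p_j)_{j\in A}$; $i(t)=\#\{j:p_j\le t\}$. Inversion bound: $\hat V^{\mathrm{IP}}_\varphi(S)=\max\{|A\cap S|:A\subseteq\{1,\dots,m\},\varphi_A=0\}$. For a reference family $\mathfrak R=(R_k,\zeta_k)_{k\in\mathcal K}$: $\mathrm{JER}_\mu(\mathfrak R)=\mathbb P_\mu(\exists k:|R_k\cap\mathcal H_0(\mu)|>\zeta_k)$, $\mathfrak A(\mathfrak R)=\{A\subseteq\{1,\dots,m\}:\forall k,\ |R_k\cap A|\le\zeta_k\}$, $\hat V^{\mathrm{JER}}_{\mathfrak R}(S)=\max_{A\in\mathfrak A(\mathfrak R)}|S\cap A|$. *)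

From HB Require Import structures.
From mathcomp Require Import all_boot all_order all_algebra.
From mathcomp Require Import all_classical all_reals all_analysis.
Set Implicit Arguments. Unset Strict Implicit. Unset Printing Implicit Defensive.
Import Order.TTheory GRing.Theory Num.Theory.
Local Open Scope ring_scope.

Section Defs.
Variables (R : realType) (m : nat).
Implicit Types (p : 'I_m -> R) (A S : {set 'I_m}).

(* p_{(i:A)}: the i-th smallest (i >= 1) of (p_j)_{j in A} *)
Definition ordstat p A (i : nat) : R :=
  nth 0 (sort <=%R [seq p j | j <- enum A]) i.-1.

Definition icount p (t : R) : nat := #|[set j | p j <= t]|.

Definition phi (l : nat -> nat -> R) p A : bool :=
  has (fun i => ordstat p A i <= l i #|A|) (iota 1 #|A|).

Definition H0 (F : Type) (H : 'I_m -> F -> Prop) (mu : F) : {set 'I_m} :=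
  [set i | `[< H i mu >]].

Definition VIP (ph : {set 'I_m} -> bool) S : nat :=
  (\max_(A : {set 'I_m} | ~~ ph A) #|A :&: S|)%N.

(* reference family (R_k, zeta_k)_k as a finite list of pairs *)
Definition refFamily := seq ({set 'I_m} * nat).

Definition JER_event (Rf : refFamily) (H0set : {set 'I_m}) : bool :=
  has (fun kz => #|kz.1 :&: H0set| > kz.2)%N Rf.

Definition in_frakA (Rf : refFamily) A : bool :=
  all (fun kz => #|kz.1 :&: A| <= kz.2)%N Rf.

Definition VJER (Rf : refFamily) S : nat :=
  (\max_(A : {set 'I_m} | in_frakA Rf A) #|S :&: A|)%N.

Definition mhat0 (l : nat -> nat -> R) p : nat :=
  (\max_(n < m.+1 | `[< forall t : R, (0 <= t <= 1)%R ->
        (l (n + icount p t - m)%N n < t)%R >]) n)%N.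

Definition Rk (l : nat -> nat -> R) p (k : nat) : {set 'I_m} :=
  if (k <= mhat0 l p)%N then [set i | p i <= l k (mhat0 l p)] else [set: 'I_m]%SET.

Definition refFam (l : nat -> nat -> R) p : refFamily :=
  [seq (Rk l p k, k.-1) | k <- iota 1 (mhat0 l p).+1].

End Defs.

From HB Require Import structures.
From mathcomp Require Import all_boot all_order all_algebra.
From mathcomp Require Import all_classical all_reals all_analysis.
From mathcomp Require Import zify.
Import Order.TTheory GRing.Theory Num.Theory.
Set Implicit Arguments. Unset Strict Implicit. Unset Printing Implicit Defensive.
Local Open Scope ring_scope.

(* Write n for m̂₀. Through the order statistics, φ_A = 0 says that A is
   "sparse" at level |A|: for 1 <= k <= |A| fewer than k of its p-values are at
   most ℓ_{k:|A|}; and A ∈ 𝔄(ℜ) says that |A| <= n and A is sparse at level n.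
   The condition defining m̂₀ at level n is equivalent to i(ℓ_{j:n}) < m - n + j
   for 1 <= j <= n. A set with φ_A = 0 satisfies it at level |A|, because the
   p-values outside A contribute at most m - |A|; hence |A| <= n, and since
   ℓ_{k:·} is nonincreasing A is sparse at level n too. Conversely, adding to a
   sparse set of size below n the outside index with the largest p-value keeps
   it sparse: if that p-value is at most ℓ_{k:n} then so are all outside ones,
   and the condition at level n leaves room for one more. So every A ∈ 𝔄(ℜ)
   lies in a set of size n with φ = 0, which gives the equality of the bounds,
   and the JER event is contained in {φ_{H₀} = 1}. All events involved depend
   on the p-values only through the finitely many comparisons p_i <= ℓ_{k:n},
   which makes them measurable. *)

Lemma leq_card_ord (m : nat) (A : {set 'I_m}) : (#|A| <= m)%N.
Proof. by have := max_card A; rewrite card_ord. Qed.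

Lemma cardsC_ord (m : nat) (A : {set 'I_m}) : #|~: A| = (m - #|A|)%N.
Proof. by have := cardsC A; rewrite card_ord; lia. Qed.

Lemma count_enum_set (T : finType) (A : {set T}) (P : pred T) :
  count P (enum A) = #|[set x in A | P x]|.
Proof.
rewrite setIdE cardE (perm_size (enum_setI _ _)) size_filter.
by apply: eq_count => x; rewrite inE.
Qed.

Section Icount.
Variables (R : realType) (m : nat) (p : 'I_m -> R).

Lemma icount_ub t : (icount p t <= m)%N.
Proof. exact: leq_card_ord. Qed.

Lemma le_icount s t : s <= t -> (icount p s <= icount p t)%N.
Proof.
move=> st; apply/subset_leq_card/fintype.subsetP => i; rewrite !inE => pi.
exact: le_trans pi st.
Qed.

Hypothesis p01 : forall i, 0 <= p i <= 1.

Lemma icount_lt0 t : t < 0 -> icount p t = 0%N.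
Proof.
move=> t0; apply/eqP; rewrite cards_eq0 -finset.subset0; apply/fintype.subsetP => i.
by rewrite !inE leNgt (lt_le_trans t0) //; case/andP: (p01 i).
Qed.

Lemma icount1 : icount p 1 = m.
Proof.
rewrite /icount -[RHS](card_ord m) -cardsT; apply: eq_card => i.
by rewrite !inE; case/andP: (p01 i).
Qed.

End Icount.

Definition sparse (R : realType) (m : nat) (l : nat -> nat -> R) (p : 'I_m -> R)
    (n : nat) (A : {set 'I_m}) :=
  forall k, (0 < k <= n)%N -> (#|[set i in A | (p i <= l k n)%R]| < k)%N.

Section OrderStatistics.
Variables (R : realType) (m : nat) (p : 'I_m -> R).
Implicit Types A : {set 'I_m}.

Lemma ordstat_le A k c : (0 < k <= #|A|)%N ->
  (ordstat p A k <= c) = (k <= #|[set i in A | (p i <= c)%R]|)%N.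
Proof.
case: k => // k /= kA.
set s := sort <=%R [seq p j | j <- enum A].
have s_sorted : sorted <=%R s by apply: sort_sorted; exact: le_total.
have size_s : size s = #|A| by rewrite size_sort size_map cardE.
have count_s : count (<= c) s = #|[set i in A | (p i <= c)%R]|.
  by rewrite count_sort count_map count_enum_set.
rewrite /ordstat -/s -count_s /=; apply/idP/idP => [sk_le|]; last exact: nth_count_le.
rewrite ltnNge; apply/negP => count_le.
have := nth_count_gt (x := c) (i := k) 0 s_sorted.
by rewrite count_le size_s kA ltNge sk_le => /(_ isT).
Qed.

Lemma phiE l A :
  phi l p A = has (fun k => k <= #|[set i in A | (p i <= l k #|A|)%R]|)%N (iota 1 #|A|).
Proof.
apply: eq_in_has => k; rewrite mem_iota add1n ltnS => kA.
exact: ordstat_le.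
Qed.

Lemma phiN_sparse l A : ~~ phi l p A <-> sparse l p #|A| A.
Proof.
rewrite phiE -all_predC; split=> [/allP small k kA | sA].
  by have := small k; rewrite mem_iota add1n ltnS kA ltnNge => /(_ isT).
by apply/allP => k; rewrite mem_iota add1n ltnS /= -ltnNge; exact: sA.
Qed.

End OrderStatistics.

Definition mhat0_cond (R : realType) (m : nat) (l : nat -> nat -> R) (p : 'I_m -> R)
    (n : nat) :=
  forall t, 0 <= t <= 1 -> l (n + icount p t - m)%N n < t.

Definition count_cond (R : realType) (m : nat) (l : nat -> nat -> R) (p : 'I_m -> R)
    (n : nat) :=
  forall j, (0 < j <= n)%N -> (icount p (l j n) < m - n + j)%N.

Section CriticalValues.
Variables (R : realType) (m : nat) (l : nat -> nat -> R).
Hypothesis l0 : forall n, (n <= m)%N -> l 0%N n = -1.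
Hypothesis l_nonincr :
  forall i n n', (i <= n)%N -> (n <= n')%N -> (n' <= m)%N -> l i n' <= l i n.
Hypothesis l_nondecr :
  forall i i' n, (i <= i')%N -> (i' <= n)%N -> (n <= m)%N -> l i n <= l i' n.
Variable p : 'I_m -> R.
Hypothesis p01 : forall i, 0 <= p i <= 1.
Implicit Types A : {set 'I_m}.

Lemma mhat0_condE n : (n <= m)%N -> mhat0_cond l p n <-> count_cond l p n.
Proof.
move=> nm; split=> [cond j /andP[j0 jn] | cnt t /andP[t0 _]].
  rewrite ltnNge; apply/negP => large.
  have l_ge0 : 0 <= l j n.
    rewrite leNgt; apply/negP => /(icount_lt0 p01) icount0.
    by move: large; rewrite icount0; lia.
  have [t [t01 tl large_t]] :
      exists t, [/\ 0 <= t <= 1, t <= l j n & (m - n + j <= icount p t)%N].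
    have [le1|/ltW gt1] := leP (l j n) 1; first by exists (l j n); rewrite l_ge0 le1 lexx.
    by exists 1; rewrite ler01 lexx gt1 (icount1 p01); split=> //; lia.
  have icount_t := icount_ub p t.
  have jt : (j <= n + icount p t - m)%N by lia.
  have tn : (n + icount p t - m <= n)%N by lia.
  by have := cond t t01; rewrite ltNge (le_trans tl (l_nondecr jt tn nm)).
case E: (n + icount p t - m)%N => [|j]; first by rewrite l0 // (lt_le_trans _ t0) ?ltrN10.
rewrite ltNge; apply/negP => tl.
have jn : (0 < j.+1 <= n)%N by have := icount_ub p t; lia.
by have := cnt _ jn; have := le_icount p tl; lia.
Qed.

Lemma mhat0_cond0 : mhat0_cond l p 0.
Proof.
move=> t /andP[t0 _]; have -> : (0 + icount p t - m = 0)%N by have := icount_ub p t; lia.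
by rewrite l0 // (lt_le_trans _ t0) ?ltrN10.
Qed.

Lemma mhat0_le : (mhat0 l p <= m)%N.
Proof. by apply/bigmax_leqP => n _; rewrite -ltnS. Qed.

Lemma mhat0_condP : mhat0_cond l p (mhat0 l p).
Proof.
have cond0 : `[< mhat0_cond l p (@ord0 m) >] by apply/asboolP/mhat0_cond0.
by rewrite /mhat0 (bigop.bigmax_eq_arg ord0 cond0); case: arg_maxnP => // n /asboolP.
Qed.

Lemma leq_mhat0 n : (n <= m)%N -> mhat0_cond l p n -> (n <= mhat0 l p)%N.
Proof.
rewrite -ltnS => nm cond.
exact: (@leq_bigmax_cond _ (fun n : 'I_m.+1 => `[< mhat0_cond l p n >]) val
  (Ordinal nm) (asboolT cond)).
Qed.

Lemma sparse_count_cond A : sparse l p #|A| A -> count_cond l p #|A|.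
Proof.
move=> sA j jA; set B := [set i | (p i <= l j #|A|)%R].
have outside : (#|B :\: A| <= m - #|A|)%N.
  by rewrite -cardsC_ord finset.setDE subset_leq_card ?finset.subsetIr.
have := sA j jA; rewrite finset.setIdE finset.setIC -/B => inside.
by rewrite /icount -/B -(cardsID A B) -addSn addnC (leq_add outside inside).
Qed.

Lemma sparse_widen n n' A : (#|A| <= n)%N -> (n <= n')%N -> (n' <= m)%N ->
  sparse l p n A -> sparse l p n' A.
Proof.
move=> An nn' n'm sA k /andP[k0 _].
have [kn|nk] := leqP k n; last first.
  rewrite finset.setIdE (leq_ltn_trans (subset_leq_card (finset.subsetIl _ _))) //.
  exact: leq_ltn_trans An nk.
apply: leq_ltn_trans (sA k _); last by rewrite k0.
apply/subset_leq_card/fintype.subsetP => i; rewrite !inE => /andP[-> pi] /=.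
exact: le_trans pi (l_nonincr kn nn' n'm).
Qed.

Lemma in_refFamP A :
  in_frakA (refFam l p) A <-> (#|A| <= mhat0 l p)%N /\ sparse l p (mhat0 l p) A.
Proof.
rewrite /in_frakA /refFam all_map /Rk; move: (mhat0 l p) => n.
have mem_k k : (k \in iota 1 n.+1) = (0 < k <= n.+1)%N by rewrite mem_iota add1n ltnS.
split=> [/allP inA | [An sA]].
  split; first by have := inA n.+1; rewrite mem_k /= leqnn ltnn finset.setTI; apply.
  move=> [//|k] /andP[_ kn]; have k_in : k.+1 \in iota 1 n.+1 by rewrite mem_k !ltnS (ltnW kn).
  by have /= := inA _ k_in; rewrite kn finset.setIdE finset.setIC ltnS.
apply/allP => k; rewrite mem_k; case: k => [//|k]; rewrite !ltnS => /andP[_ kn] /=.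
case: ifPn => [kn' | /negbTE kn']; last by rewrite finset.setTI (leq_trans An) // leqNgt kn'.
by have := sA k.+1; rewrite kn' finset.setIdE finset.setIC ltnS => /(_ isT).
Qed.

Lemma phiN_in_frakA A : ~~ phi l p A -> in_frakA (refFam l p) A.
Proof.
move=> /phiN_sparse sA; have Am := leq_card_ord A.
have An : (#|A| <= mhat0 l p)%N.
  by apply: (leq_mhat0 Am); apply: (mhat0_condE Am).2; exact: sparse_count_cond.
by apply/in_refFamP; split; last exact: sparse_widen (leqnn _) An mhat0_le sA.
Qed.

Lemma sparse_setU1 n A x : (n <= m)%N -> count_cond l p n -> (#|A| < n)%N ->
  sparse l p n A -> x \notin A -> (forall y, y \notin A -> p y <= p x) ->
  sparse l p n (x |: A).
Proof.
move=> nm cnt An sA xA xmax k /andP[k0 kn]; set S := [set i | (p i <= l k n)%R].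
have SA : [set i in A | (p i <= l k n)%R] = S :&: A by rewrite finset.setIdE finset.setIC.
have [px_le|px_gt] := leP (p x) (l k n); last first.
  rewrite (_ : [set i in x |: A | _] = [set i in A | (p i <= l k n)%R]) ?sA ?k0 //.
  apply/finset.setP => i; rewrite !inE; case: eqVneq => [->|_] //=.
  by rewrite leNgt px_gt andbF.
have outside : S :\: A = ~: A.
  apply/finset.setP => i; rewrite !inE; case: (boolP (i \in A)) => //= iA.
  exact: le_trans (xmax i iA) px_le.
have := cnt k; rewrite k0 kn /icount -/S -(cardsID A S) outside cardsC_ord => /(_ isT) small.
have -> : [set i in x |: A | (p i <= l k n)%R] = x |: (S :&: A).
  by rewrite -SA; apply/finset.setP => i; rewrite !inE; case: eqVneq => [->|] //=; rewrite px_le.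
rewrite cardsU1 finset.in_setI (negbTE xA) andbF; move: small An.
(* lia compares atoms syntactically, and the two occurrences of #|S :&: A|
   differ in hidden (convertible) instance arguments. *)
by set a := #|S :&: A|; lia.
Qed.

Lemma sparse_extend n A : (n <= m)%N -> count_cond l p n -> (#|A| <= n)%N ->
  sparse l p n A -> exists B : {set 'I_m}, [/\ A \subset B, #|B| = n & sparse l p n B].
Proof.
move=> nm cnt; have [r] := ubnP (n - #|A|)%N; elim: r A => // r IH A rA An sA.
have [nA|An'] := leqP n #|A|; first by exists A; split=> //; apply/eqP; rewrite eqn_leq An.
have [x0 x0A] : exists x0, x0 \in ~: A.
  by apply/set0Pn; rewrite -card_gt0 cardsC_ord subn_gt0 (leq_trans An' nm).
case: (arg_maxP p x0A) => x xA xmax.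
have {}xA : x \notin A by rewrite -finset.in_setC.
have {}xmax y : y \notin A -> p y <= p x by rewrite -finset.in_setC; exact: xmax.
have xAn : (#|x |: A| <= n)%N by rewrite cardsU1 xA.
have [|B [AB Bn sB]] := IH (x |: A) _ xAn (sparse_setU1 nm cnt An' sA xA xmax).
  by rewrite cardsU1 xA; move: rA; lia.
by exists B; split=> //; exact: fintype.subset_trans (finset.subsetUr _ _) AB.
Qed.

Lemma VIP_VJER S : VIP (phi l p) S = VJER (refFam l p) S.
Proof.
apply/eqP; rewrite eqn_leq; apply/andP; split; apply/bigmax_leqP => A hA.
  by rewrite finset.setIC; exact: (leq_bigmax_cond _ (phiN_in_frakA hA)).
have [An sA] := (in_refFamP A).1 hA.
have [B [AB Bn sB]] := sparse_extend mhat0_le ((mhat0_condE mhat0_le).1 mhat0_condP) An sA.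
have phiB : ~~ phi l p B by apply/phiN_sparse; rewrite Bn.
apply: leq_trans (leq_bigmax_cond (F := fun B => #|B :&: S|) _ phiB).
by rewrite finset.setIC; apply/subset_leq_card/finset.setSI.
Qed.

End CriticalValues.

Definition same_thresholds (R : realType) (m : nat) (l : nat -> nat -> R) (p p' : 'I_m -> R) :=
  forall i k n, (k <= m)%N -> (n <= m)%N -> (p i <= l k n) = (p' i <= l k n).

Section SameThresholds.
Variables (R : realType) (m : nat) (l : nat -> nat -> R).
Hypothesis l0 : forall n, (n <= m)%N -> l 0%N n = -1.
Hypothesis l_nondecr :
  forall i i' n, (i <= i')%N -> (i' <= n)%N -> (n <= m)%N -> l i n <= l i' n.
Variables p p' : 'I_m -> R.
Hypotheses (p01 : forall i, 0 <= p i <= 1) (p'01 : forall i, 0 <= p' i <= 1).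
Hypothesis pp' : same_thresholds l p p'.

Lemma phi_same_thresholds (A : {set 'I_m}) : phi l p A = phi l p' A.
Proof.
rewrite !phiE; apply: eq_in_has => k; rewrite mem_iota add1n ltnS => /andP[_ kA].
have km : (k <= m)%N := leq_trans kA (leq_card_ord A).
by congr (_ <= _)%N; apply: eq_card => i; rewrite !inE pp' ?km ?leq_card_ord.
Qed.

Lemma mhat0_same_thresholds : mhat0 l p = mhat0 l p'.
Proof.
apply: eq_bigl => n; have nm : (n <= m)%N by rewrite -ltnS.
have icountE j : (j <= n)%N -> icount p (l j n) = icount p' (l j n).
  by move=> jn; apply: eq_card => i; rewrite !inE pp' // (leq_trans jn nm).
have count_iff : count_cond l p n <-> count_cond l p' n.
  by split=> cnt j /[dup] /andP[_ /icountE jn] /cnt; [rewrite jn | rewrite -jn].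
apply/asboolP/asboolP.
  by move=> /(mhat0_condE l0 l_nondecr p01 nm)/count_iff/(mhat0_condE l0 l_nondecr p'01 nm).
by move=> /(mhat0_condE l0 l_nondecr p'01 nm)/count_iff/(mhat0_condE l0 l_nondecr p01 nm).
Qed.

Lemma refFam_same_thresholds : refFam l p = refFam l p'.
Proof.
rewrite /refFam /Rk -mhat0_same_thresholds; apply: eq_map => k.
case: ifP => // kn; congr (_, _); apply/finset.setP => i.
by rewrite !inE pp' ?mhat0_le ?(leq_trans kn (mhat0_le l p)).
Qed.

End SameThresholds.

Lemma JER_eventE (m : nat) (Rf : refFamily m) (A : {set 'I_m}) :
  JER_event Rf A = ~~ in_frakA Rf A.
Proof. by rewrite /JER_event /in_frakA -has_predC; apply: eq_has => kz /=; rewrite ltnNge. Qed.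

Local Open Scope classical_set_scope.

Section ThresholdMeasurability.
Variables (d : measure_display) (T : measurableType d) (R : realType) (I : eqType).
Variable g : I -> T -> R.
Hypothesis mg : forall i, measurable_fun setT (g i).

Lemma measurable_le_fun i c : measurable [set w | g i w <= c].
Proof.
have := mg i measurableT (measurable_itv `]-oo, c]%R); rewrite setTI.
by congr measurable; apply/seteqP; split=> w /=; rewrite /preimage /= in_itv.
Qed.

Lemma measurable_threshold_invariant (X : seq (I * R)) (Q : T -> Prop) :
  (forall w w', {in X, forall x, (g x.1 w <= x.2) = (g x.1 w' <= x.2)} -> Q w -> Q w') ->
  measurable [set w | Q w].
Proof.
elim: X Q => [|x X IH] Q invQ.
  have [[w0 Qw0]|noQ] := pselect (exists w, Q w).
    by rewrite (_ : [set w | Q w] = setT) //; apply/seteqP; split=> // w _; exact: invQ Qw0.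
  by rewrite (_ : [set w | Q w] = set0) //; apply/seteqP; split=> // w Qw; apply: noQ; exists w.
pose atom w := g x.1 w <= x.2.
pose agreeX w w' := {in X, forall y, (g y.1 w <= y.2) = (g y.1 w' <= y.2)}.
(* Splitting on the first comparison leaves events invariant under X alone. *)
pose Q_ b w := exists w0, [/\ atom w0 = b, Q w0 & agreeX w0 w].
have mQ_ b : measurable [set w | Q_ b w].
  apply: IH => w w' ww' [w0 [w0b Qw0 w0w]]; exists w0; split=> // y yX.
  by rewrite w0w // ww'.
have matom : measurable [set w | atom w] by exact: measurable_le_fun.
rewrite (_ : [set w | Q w] = ([set w | atom w] `&` [set w | Q_ true w])
                             `|` (~` [set w | atom w] `&` [set w | Q_ false w])).
  by apply: measurableU; apply: measurableI => //; exact: measurableC.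
apply/seteqP; split=> w /=.
  by move=> Qw; case Ew: (atom w); [left | right]; split=> //; exists w.
have agree_x w0 b : atom w0 = b -> atom w = b -> agreeX w0 w -> Q w0 -> Q w.
  move=> w0b wb w0w; apply: invQ => y; rewrite inE => /orP[/eqP -> | yX]; last exact: w0w.
  by rewrite -/(atom w0) -/(atom w) w0b wb.
case=> [[wt [w0 [w0t Qw0 w0w]]] | [wf [w0 [w0f Qw0 w0w]]]].
  exact: agree_x w0t wt w0w Qw0.
by apply: agree_x w0f _ w0w Qw0; apply/negbTE/negP.
Qed.

End ThresholdMeasurability.

Theorem mainTheorem9 (R : realType) (d : measure_display) (Omega : measurableType d)
  (F : Type) (P : F -> probability Omega R) (m : nat)
  (H : 'I_m -> F -> Prop) (p : 'I_m -> Omega -> R)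
  (l : nat -> nat -> R) (alpha : R) :
  (forall i, measurable_fun setT (p i)) ->
  (forall i w, 0 <= p i w <= 1) ->
  (forall n, (n <= m)%N -> l 0%N n = -1) ->
  (forall i n n', (i <= n)%N -> (n <= n')%N -> (n' <= m)%N -> l i n' <= l i n) ->
  (forall i i' n, (i <= i')%N -> (i' <= n)%N -> (n <= m)%N -> l i n <= l i' n) ->
  (forall mu : F,
     (P mu [set w | phi l (fun j => p j w) (H0 H mu)] <= alpha%:E)%E) ->
  (forall mu : F,
     (P mu [set w | JER_event (refFam l (fun j => p j w)) (H0 H mu)] <= alpha%:E)%E)
  /\
  (forall (w : Omega) (S : {set 'I_m}),
     VIP (phi l (fun j => p j w)) S = VJER (refFam l (fun j => p j w)) S).
Proof.
move=> mp p01 l0 l_nonincr l_nondecr phi_level.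
split=> [mu|w S]; last exact: VIP_VJER.
pose crit := [seq l kn.1 kn.2 | kn <- [seq (k, n) | k <- iota 0 m.+1, n <- iota 0 m.+1]].
pose X := [seq (i, c) | i <- enum 'I_m, c <- crit].
have same w w' : {in X, forall x, (p x.1 w <= x.2) = (p x.1 w' <= x.2)} ->
    same_thresholds l (p^~ w) (p^~ w').
  move=> agree i k n km nm; apply: (agree (i, l k n)); apply: allpairs_f; first exact: mem_enum.
  by apply: (map_f _ (allpairs_f pair _ _)); rewrite mem_iota ltnS.
have mJER : measurable [set w | JER_event (refFam l (p^~ w)) (H0 H mu)].
  apply: (measurable_threshold_invariant mp (X := X)) => w w' /same ww'.
  by rewrite (refFam_same_thresholds l0 l_nondecr (p01^~ w) (p01^~ w') ww').
have mphi : measurable [set w | phi l (p^~ w) (H0 H mu)].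
  apply: (measurable_threshold_invariant mp (X := X)) => w w' /same ww'.
  by rewrite (phi_same_thresholds ww').
apply: le_trans (phi_level mu); apply: le_measure; rewrite ?inE // => w.
rewrite /mkset JER_eventE; apply: contraNT.
exact: (phiN_in_frakA l0 l_nonincr l_nondecr (p01 ^~ w)).
Qed.
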